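(* Assume proportional damping $D=\alpha M+\beta K$ with $\alpha,\beta\ge0$. Let $\nu_p,\nu_q\ge1$, let $\zeta_1,\dots,\zeta_{\nu_p}>0$ and $\omega_1,\dots,\omega_{\nu_q}>0$ be such that $G(\pm i\zeta_j)$, $G(\pm i\omega_k)$ exist, and let $\rho_j,\varphi_k$ be real weights. Form $\widetilde{\mathbb M},\widetilde{\mathbb K}\in\mathbb{C}^{2\nu_q\times 2\nu_p}$, $\widetilde{\mathbb B}\in\mathbb{C}^{2\nu_q}$, $\widetilde{\mathbb C}\in\mathbb{C}^{1\times2\nu_p}$ using the ordered node lists $(\zeta_1,-\zeta_1,\zeta_2,-\zeta_2,\dots,\zeta_{\nu_p},-\zeta_{\nu_p})$ with weights $(\rho_1,\rho_1,\dots,\rho_{\nu_p},\rho_{\nu_p})$ and $(\omega_1,-\omega_1,\dots,\omega_{\nu_q},-\omega_{\nu_q})$ with weights $(\varphi_1,\varphi_1,\dots,\varphi_{\nu_q},\varphi_{\nu_q})$. For $1\le k\le\nu_q$, $1\le j\le\nu_p$, let $\widetilde{\mathbb M}^{(2)}_{k,j},\widetilde{\mathbb K}^{(2)}_{k,j}\in\mathbb{C}^{2\times2}$ be the submatrices in rows $2k-1,2k$ and columns $2j-1,2j$, $\widetilde{\mathbb B}^{(2)}_k$ the entries $2k-1,2k$ of $\widetilde{\mathbb B}$, $\widetilde{\mathbb C}^{(2)}_j$ the entries $2j-1,2j$ of $\widetilde{\mathbb C}$, and define $$\widetilde{\mathbb M}^{\mathrm R}_{k,j}=\mathcal F_2\widetilde{\mathbb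 M}^{(2)}_{k,j}\mathcal F_1^{\mathrm H},\quad \widetilde{\mathbb K}^{\mathrm R}_{k,j}=\mathcal F_2\widetilde{\mathbb K}^{(2)}_{k,j}\mathcal F_1^{\mathrm H},\quad \widetilde{\mathbb B}^{\mathrm R}_k=\mathcal F_2\widetilde{\mathbb B}^{(2)}_k,\quad \widetilde{\mathbb C}^{\mathrm R}_j=\widetilde{\mathbb C}^{(2)}_j\mathcal F_1^{\mathrm H}.$$ Then: (i) $\widetilde{\mathbb M}^{\mathrm R}_{k,j}$ and $\widetilde{\mathbb K}^{\mathrm R}_{k,j}$ are real $2\times2$ matrices, and $$\widetilde{\mathbb B}^{\mathrm R}_k=\sqrt2\,\varphi_k\begin{bmatrix}\mathrm{Re}\,H(i\omega_k)\\-\mathrm{Im}\,H(i\omega_k)\end{bmatrix},\qquad \widetilde{\mathbb C}^{\mathrm R}_j=\sqrt2\,\rho_j\zeta_j\big[\mathrm{Re}\,H(i\zeta_j)\ \ \mathrm{Im}\,H(i\zeta_j)\big];$$ (ii) with $\Omega_{k,2}=\omega_k^2I_2$, $\Omega_{k,1}=\begin{bmatrix}0&\omega_k\\-\omega_k&0\end{bmatrix}$, $\Theta_{j,2}=\zeta_j^2I_2$, $\Theta_{j,1}=\begin{bmatrix}0&\zeta_j\\-\zeta_j&0\end{bmatrix}$, $$H_{\zeta,kj}=2\varphi_k\rho_j\zeta_j\begin{bmatrix}\mathrm{Re}\,H(i\zeta_j)&\mathrm{Im}\,H(i\zeta_j)\\0&0\end{bmatrix},\qquad H_{\omega,kj}=2\varphi_k\rho_j\zeta_j\begin{bmatrix}\mathrm{Re}\,H(i\omega_k)&0\\-\mathrm{Im}\,H(i\omega_k)&0\end{bmatrix},$$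 the following hold: $$-\Omega_{k,2}\widetilde{\mathbb M}^{\mathrm R}_{k,j}+\Omega_{k,1}\big(\alpha\widetilde{\mathbb M}^{\mathrm R}_{k,j}+\beta\widetilde{\mathbb K}^{\mathrm R}_{k,j}\big)+\widetilde{\mathbb K}^{\mathrm R}_{k,j}=H_{\zeta,kj},$$ $$-\widetilde{\mathbb M}^{\mathrm R}_{k,j}\Theta_{j,2}+\big(\alpha\widetilde{\mathbb M}^{\mathrm R}_{k,j}+\beta\widetilde{\mathbb K}^{\mathrm R}_{k,j}\big)\Theta_{j,1}+\widetilde{\mathbb K}^{\mathrm R}_{k,j}=H_{\omega,kj}.$$
   Context: Single-input single-output second-order system: $M,D,K\in\mathbb{R}^{n\times n}$ with $M$ nonsingular, $B\in\mathbb{R}^{n\times1}$, $C\in\mathbb{R}^{1\times n}$, $G(s)=(s^2M+sD+K)^{-1}$ (wherever the inverse exists), and transfer function $H(s)=CG(s)B$. The superscript $\mathrm H$ denotes conjugate transpose. For an ordered list of real nodes $z_1,\dots,z_{N_p}$ with real weights $r_1,\dots,r_{N_p}$ and an ordered list of real nodes $w_1,\dots,w_{N_q}$ with real weights $f_1,\dots,f_{N_q}$, define $\widetilde U\in\mathbb{C}^{n\times N_p}$ with $j$-th column $r_jz_jG(iz_j)B$, $\widetilde L^{\mathrm H}\in\mathbb{C}^{N_q\times n}$ with $k$-th row $f_kCG(iw_k)$, and $\widetilde{\mathbb M}=\widetilde L^{\mathrm H}M\widetilde U$, $\widetilde{\mathbb K}=\widetilde L^{\mathrm H}K\widetilde U$,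 $\widetilde{\mathbb B}=\widetilde L^{\mathrm H}B$ (entries $f_kH(iw_k)$), $\widetilde{\mathbb C}=C\widetilde U$ (entries $r_jz_jH(iz_j)$). The unitary matrices are $$\mathcal F_1=\frac{1}{\sqrt2}\begin{bmatrix}1&-1\\ i&i\end{bmatrix},\qquad \mathcal F_2=\frac{1}{\sqrt2}\begin{bmatrix}1&1\\ i&-i\end{bmatrix}.$$ *)

From HB Require Import structures.
From mathcomp Require Import all_boot all_order all_algebra.
From mathcomp Require Import complex.
Set Implicit Arguments. Unset Strict Implicit. Unset Printing Implicit Defensive.
Import GRing.Theory Num.Theory.
Local Open Scope ring_scope.
Local Open Scope complex_scope.

Section Defs.
Variable R : rcfType.
Local Notation C := R[i].

Definition iC : C := Complex 0 1.

Definition cmx (m p : nat) (A : 'M[R]_(m, p)) : 'M[C]_(m, p) :=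
  map_mx (fun x => x%:C) A.

Definition ctrmx (m p : nat) (A : 'M[C]_(m, p)) : 'M[C]_(p, m) :=
  map_mx (@conjc R) A^T.

(* the pencil s^2 M + s D + K, and G(s) = its inverse (meaningful when it is invertible) *)
Definition pencil n (M D K : 'M[R]_n) (s : C) : 'M[C]_n :=
  s ^+ 2 *: cmx M + s *: cmx D + cmx K.
Definition Gres n (M D K : 'M[R]_n) (s : C) : 'M[C]_n := invmx (pencil M D K s).
Definition Gexists n (M D K : 'M[R]_n) (s : C) : Prop := pencil M D K s \in unitmx.
Definition Htf n (M D K : 'M[R]_n) (B : 'cV[R]_n) (Cm : 'rV[R]_n) (s : C) : C :=
  (cmx Cm *m Gres M D K s *m cmx B) 0 0.

Definition Utl n N (M D K : 'M[R]_n) (B : 'cV[R]_n) (z r : 'I_N -> R) : 'M[C]_(n, N) :=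
  \matrix_(a < n, j < N) ((r j * z j)%:C * (Gres M D K (iC * (z j)%:C) *m cmx B) a 0).
Definition LtlH n N (M D K : 'M[R]_n) (Cm : 'rV[R]_n) (w f : 'I_N -> R) : 'M[C]_(N, n) :=
  \matrix_(k < N, a < n) ((f k)%:C * (cmx Cm *m Gres M D K (iC * (w k)%:C)) 0 a).

Definition MMt n Np Nq (M D K : 'M[R]_n) (B : 'cV[R]_n) (Cm : 'rV[R]_n)
  (z r : 'I_Np -> R) (w f : 'I_Nq -> R) : 'M[C]_(Nq, Np) :=
  LtlH M D K Cm w f *m cmx M *m Utl M D K B z r.
Definition KKt n Np Nq (M D K : 'M[R]_n) (B : 'cV[R]_n) (Cm : 'rV[R]_n)
  (z r : 'I_Np -> R) (w f : 'I_Nq -> R) : 'M[C]_(Nq, Np) :=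
  LtlH M D K Cm w f *m cmx K *m Utl M D K B z r.
Definition BBt n Nq (M D K : 'M[R]_n) (Cm : 'rV[R]_n) (B : 'cV[R]_n)
  (w f : 'I_Nq -> R) : 'cV[C]_Nq :=
  LtlH M D K Cm w f *m cmx B.
Definition CCt n Np (M D K : 'M[R]_n) (B : 'cV[R]_n) (Cm : 'rV[R]_n)
  (z r : 'I_Np -> R) : 'rV[C]_Np :=
  cmx Cm *m Utl M D K B z r.

Definition mx2 (T : Type) (a b c d : T) : 'M[T]_2 :=
  \matrix_(i < 2, j < 2) (if i == 0 :> nat then (if j == 0 :> nat then a else b)
                          else (if j == 0 :> nat then c else d)).
Definition cv2 (T : Type) (a b : T) : 'cV[T]_2 :=
  \matrix_(i < 2, j < 1) (if i == 0 :> nat then a else b).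
Definition rv2 (T : Type) (a b : T) : 'rV[T]_2 :=
  \matrix_(i < 1, j < 2) (if j == 0 :> nat then a else b).

Definition F1 : 'M[C]_2 := (Num.sqrt (2 : R))^-1%:C *: mx2 1 (-1) iC iC.
Definition F2 : 'M[C]_2 := (Num.sqrt (2 : R))^-1%:C *: mx2 1 1 iC (- iC).

End Defs.

(* index bookkeeping: 0-based index j of 'I_(2*m) belongs to pair j %/ 2;
   0-based 2k, 2k+1 correspond to the 1-based rows 2k+1, 2k+2 *)
Lemma half_ord_proof m (j : 'I_(2 * m)) : (j %/ 2 < m)%N.
Proof. by rewrite ltn_divLR // -[(m * 2)%N]mulnC ltn_ord. Qed.
Definition half_ord m (j : 'I_(2 * m)) : 'I_m := Ordinal (half_ord_proof j).

Lemma blk_proof m (k : 'I_m) (a : 'I_2) : (2 * k + a < 2 * m)%N.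
Proof.
have hk := ltn_ord k; have ha := ltn_ord a.
apply: (@leq_trans (2 * k.+1)); last by rewrite leq_mul2l.
by rewrite mulnS addnC ltn_add2r.
Qed.
Definition blk m (k : 'I_m) (a : 'I_2) : 'I_(2 * m) := Ordinal (blk_proof k a).

Definition ilv_nodes (R : pzRingType) m (x : 'I_m -> R) (j : 'I_(2 * m)) : R :=
  if odd j then - x (half_ord j) else x (half_ord j).
Definition ilv_weights (R : Type) m (r : 'I_m -> R) (j : 'I_(2 * m)) : R :=
  r (half_ord j).

Definition blk2 (T : Type) p q (X : 'M[T]_(2 * q, 2 * p)) (k : 'I_q) (j : 'I_p) : 'M[T]_2 :=
  \matrix_(a < 2, b < 2) X (blk k a) (blk j b).
Definition blkc2 (T : Type) q (X : 'cV[T]_(2 * q)) (k : 'I_q) : 'cV[T]_2 :=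
  \matrix_(a < 2, b < 1) X (blk k a) 0.
Definition blkr2 (T : Type) p (X : 'rV[T]_(2 * p)) (j : 'I_p) : 'rV[T]_2 :=
  \matrix_(a < 1, b < 2) X 0 (blk j b).

From HB Require Import structures.
From mathcomp Require Import all_boot all_order all_algebra.
From mathcomp Require Import complex.
From mathcomp Require Import ring lra zify.
Set Implicit Arguments. Unset Strict Implicit. Unset Printing Implicit Defensive.
Import GRing.Theory Num.Theory.
Local Open Scope ring_scope.
Local Open Scope complex_scope.

(* Since the data are real, G(-is) is the entrywise conjugate of G(is).  With the
   interleaved nodes +-zeta_j, +-omega_k each 2x2 block of M~ (or K~) is therefore
   c [u, -v; conj v, -conj u], where u = C G(i omega_k) M G(i zeta_j) B and v is the same
   at -zeta_j, and F2 (.) F1^H maps such a block to a real matrix of real and imaginary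
   parts of u and v.  Under proportional damping P(i w) = (-w^2 + i w alpha) M
   + (i w beta + 1) K, so inserting G(i w) P(i w) = I (resp. P(i z) G(i z) = I) between
   C G(i w) and G(i z) B gives -w^2 u_M + i w (alpha u_M + beta u_K) + u_K = H(i z)
   (resp. H(i w)); the real and imaginary parts of these identities at z and -z are the
   entries of the block identities (ii). *)

Lemma ord2P (P : 'I_2 -> Prop) : P 0 -> P 1 -> forall i, P i.
Proof.
move=> P0 P1 [[|[|i]] hi] //.
- by rewrite (_ : Ordinal hi = 0) //; apply: val_inj.
- by rewrite (_ : Ordinal hi = 1) //; apply: val_inj.
Qed.

Section TwoByTwo.
Variable T : pzRingType.
Implicit Types a b c d e f g h x : T.

Local Ltac mx2_ext := apply/matrixP; elim/ord2P; elim/ord2P;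
  rewrite !mxE ?big_ord_recr ?big_ord0 /= ?mxE /= ?add0r.

Lemma mulmx_mx2 a b c d e f g h :
  mx2 a b c d *m mx2 e f g h = mx2 (a*e+b*g) (a*f+b*h) (c*e+d*g) (c*f+d*h).
Proof. by mx2_ext. Qed.

Lemma addmx_mx2 a b c d e f g h : mx2 a b c d + mx2 e f g h = mx2 (a+e) (b+f) (c+g) (d+h).
Proof. by mx2_ext. Qed.

Lemma oppmx_mx2 a b c d : - mx2 a b c d = mx2 (-a) (-b) (-c) (-d).
Proof. by mx2_ext. Qed.

Lemma scalemx_mx2 x a b c d : x *: mx2 a b c d = mx2 (x*a) (x*b) (x*c) (x*d).
Proof. by mx2_ext. Qed.

Lemma scalar_mx2 x : x%:M = mx2 x 0 0 x :> 'M[T]_2.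
Proof. by mx2_ext. Qed.

Lemma mulmx_mx2_cv2 a b c d e f : mx2 a b c d *m cv2 e f = cv2 (a*e+b*f) (c*e+d*f).
Proof.
by apply/matrixP; elim/ord2P => j; rewrite !ord1 !mxE !big_ord_recr big_ord0 /= !mxE /= add0r.
Qed.

Lemma mulmx_rv2_mx2 a b c d e f : rv2 e f *m mx2 a b c d = rv2 (e*a+f*c) (e*b+f*d).
Proof.
by apply/matrixP => i; rewrite !ord1; elim/ord2P; rewrite !mxE !big_ord_recr big_ord0 /= !mxE /= add0r.
Qed.

Lemma scalemx_cv2 x a b : x *: cv2 a b = cv2 (x*a) (x*b).
Proof. by apply/matrixP; elim/ord2P => j; rewrite !mxE. Qed.

Lemma scalemx_rv2 x a b : x *: rv2 a b = rv2 (x*a) (x*b).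
Proof. by apply/matrixP => i; elim/ord2P; rewrite !mxE. Qed.

Lemma blk2E p q (X : 'M[T]_(2 * q, 2 * p)) k j :
  blk2 X k j = mx2 (X (blk k 0) (blk j 0)) (X (blk k 0) (blk j 1))
                   (X (blk k 1) (blk j 0)) (X (blk k 1) (blk j 1)).
Proof. by mx2_ext. Qed.

Lemma blkc2E q (X : 'cV[T]_(2 * q)) k : blkc2 X k = cv2 (X (blk k 0) 0) (X (blk k 1) 0).
Proof. by apply/matrixP; elim/ord2P => j; rewrite !ord1 !mxE. Qed.

Lemma blkr2E p (X : 'rV[T]_(2 * p)) j : blkr2 X j = rv2 (X 0 (blk j 0)) (X 0 (blk j 1)).
Proof. by apply/matrixP => i; rewrite !ord1; elim/ord2P; rewrite !mxE. Qed.

End TwoByTwo.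

Lemma half_ord_blk m (k : 'I_m) (a : 'I_2) : half_ord (blk k a) = k.
Proof. by apply: val_inj; case: a => [[|[|]]] //= _; lia. Qed.

Lemma ilv_nodes_blk (R : pzRingType) m (x : 'I_m -> R) k (a : 'I_2) :
  ilv_nodes x (blk k a) = if a == 0 then x k else - x k.
Proof.
rewrite /ilv_nodes half_ord_blk.
by case: a => [[|[|]]] //= _; rewrite oddD oddM /= ?addbT ?addbF.
Qed.

Lemma ilv_weights_blk (R : Type) m (x : 'I_m -> R) k (a : 'I_2) :
  ilv_weights x (blk k a) = x k.
Proof. by rewrite /ilv_weights half_ord_blk. Qed.

Section ComplexTwoByTwo.
Variable R : rcfType.
Local Notation C := R[i].
Local Notation sqrt2 := (Num.sqrt (2 : R)).

Lemma cmx_mx2 (a b c d : R) : cmx (mx2 a b c d) = mx2 a%:C b%:C c%:C d%:C.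
Proof. by apply/matrixP; elim/ord2P; elim/ord2P; rewrite !mxE. Qed.

Lemma cmx_cv2 (a b : R) : cmx (cv2 a b) = cv2 a%:C b%:C.
Proof. by apply/matrixP; elim/ord2P => j; rewrite !mxE. Qed.

Lemma cmx_rv2 (a b : R) : cmx (rv2 a b) = rv2 a%:C b%:C.
Proof. by apply/matrixP => i; elim/ord2P; rewrite !mxE. Qed.

Lemma ctrmx_mx2 (p q r s : C) : ctrmx (mx2 p q r s) = mx2 p^* r^* q^* s^*.
Proof. by apply/matrixP; elim/ord2P; elim/ord2P; rewrite !mxE. Qed.

Lemma cmxD m p (A B : 'M[R]_(m, p)) : cmx (A + B) = cmx A + cmx B.
Proof. exact: map_mxD. Qed.

Lemma cmxZ m p a (A : 'M[R]_(m, p)) : cmx (a *: A) = a%:C *: cmx A.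
Proof. exact: map_mxZ. Qed.

Lemma ctrmxZ_real m p (a : R) (A : 'M[C]_(m, p)) : ctrmx (a%:C *: A) = a%:C *: ctrmx A.
Proof. by apply/matrixP => i j; rewrite !mxE; case: (A j i) => x y; simpc. Qed.

Lemma sqrt2_sqr : sqrt2 ^+ 2 = 2.
Proof. by rewrite sqr_sqrtr ?ler0n. Qed.

Lemma sqrt2_neq0 : sqrt2 != 0.
Proof. by rewrite sqrtr_eq0 -Order.TotalTheory.ltNge ltr0n. Qed.

Lemma sqrt2E : sqrt2 = 2 / sqrt2.
Proof. by apply: (mulIf sqrt2_neq0); rewrite divfK ?sqrt2_neq0 // -expr2 sqrt2_sqr. Qed.

Local Ltac complex_field := simpc; rewrite -?complexr0; congr (_ +i* _); rewrite /=; field.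

Local Notation mx2E := (mulmx_mx2, addmx_mx2, oppmx_mx2, scalemx_mx2, scalar_mx2,
  mulmx_mx2_cv2, mulmx_rv2_mx2, scalemx_cv2, scalemx_rv2, cmx_mx2, cmx_cv2, cmx_rv2, ctrmx_mx2).

Lemma F2_F1H X : F2 R *m X *m ctrmx (F1 R)
  = (2^-1)%:C *: (mx2 1 1 (iC R) (- iC R) *m X *m ctrmx (mx2 1 (-1) (iC R) (iC R))).
Proof.
by rewrite /F1 /F2 ctrmxZ_real -!scalemxAl -scalemxAr scalerA -rmorphM -invfM -expr2 sqrt2_sqr.
Qed.

Definition realify (u v : C) : 'M[R]_2 :=
  mx2 (complex.Re u + complex.Re v) (complex.Im u - complex.Im v)
      (- (complex.Im u + complex.Im v)) (complex.Re u - complex.Re v).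

(* In ring_scope [x^*] denotes Num.conj; [%C] selects conjc, the conjugation of ctrmx. *)
Lemma F2_realify (u v : C) :
  F2 R *m mx2 u (- v) v^*%C (- u^*%C) *m ctrmx (F1 R) = cmx (realify u v).
Proof.
rewrite F2_F1H /realify /iC !mx2E; case: u v => [a b] [c d].
by congr mx2; complex_field.
Qed.

Lemma F2_cv2_conj (a : C) :
  F2 R *m cv2 a a^* = sqrt2%:C *: cmx (cv2 (complex.Re a) (- complex.Im a)).
Proof.
have s0 := sqrt2_neq0.
rewrite /F2 -scalemxAl {2}sqrt2E /iC !mx2E; case: a => [a b].
by congr cv2; complex_field.
Qed.

Lemma rv2_conj_F1H (a : C) :
  rv2 a (- a^*%C) *m ctrmx (F1 R) = sqrt2%:C *: cmx (rv2 (complex.Re a) (complex.Im a)).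
Proof.
have s0 := sqrt2_neq0.
rewrite /F1 ctrmxZ_real -scalemxAr {2}sqrt2E /iC !mx2E; case: a => [a b].
by congr rv2; complex_field.
Qed.

Lemma realify_pencil_left (w al be c : R) (um uk vm vk h : C) :
  - (w ^+ 2)%:C * um + iC R * w%:C * (al%:C * um + be%:C * uk) + uk = h ->
  - (w ^+ 2)%:C * vm + iC R * w%:C * (al%:C * vm + be%:C * vk) + vk = h^* ->
  - (((w ^+ 2)%:C)%:M *m cmx (c *: realify um vm))
    + cmx (mx2 0 w (- w) 0)
      *m (al%:C *: cmx (c *: realify um vm) + be%:C *: cmx (c *: realify uk vk))
    + cmx (c *: realify uk vk)
  = (2 * c)%:C *: cmx (mx2 (complex.Re h) (complex.Im h) 0 0).
Proof.
case: um uk vm vk h => [a1 b1] [a2 b2] [a3 b3] [a4 b4] [x y] /=.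
rewrite /iC; simpc; case=> Ex Ey; case=> Ex' Ey'.
rewrite /realify !mx2E /=.
by congr mx2; simpc; congr (_ +i* _); nra.
Qed.

Lemma realify_pencil_right (z al be c : R) (um uk vm vk h : C) :
  - (z ^+ 2)%:C * um + iC R * z%:C * (al%:C * um + be%:C * uk) + uk = h ->
  - ((- z) ^+ 2)%:C * vm + iC R * (- z)%:C * (al%:C * vm + be%:C * vk) + vk = h ->
  - (cmx (c *: realify um vm) *m ((z ^+ 2)%:C)%:M)
    + (al%:C *: cmx (c *: realify um vm) + be%:C *: cmx (c *: realify uk vk))
      *m cmx (mx2 0 z (- z) 0)
    + cmx (c *: realify uk vk)
  = (2 * c)%:C *: cmx (mx2 (complex.Re h) 0 (- complex.Im h) 0).
Proof.
case: um uk vm vk h => [a1 b1] [a2 b2] [a3 b3] [a4 b4] [x y] /=.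
rewrite /iC; simpc; case=> Ex Ey; case=> Ex' Ey'.
rewrite /realify !mx2E /=.
by congr mx2; simpc; congr (_ +i* _); nra.
Qed.

(* Stated with [%:C] rather than through the canonical morphism, so that [ring] sees
   syntactically equal atoms. *)
Lemma real_complexM (x y : R) : (x * y)%:C = x%:C * y%:C :> C.
Proof. exact: rmorphM. Qed.

Lemma real_complexN (x : R) : (- x)%:C = - x%:C :> C.
Proof. exact: rmorphN. Qed.

Lemma conjc_iC (x : R) : (iC R * x%:C)^* = iC R * (- x)%:C.
Proof. by rewrite /iC; simpc. Qed.

Lemma conjc_mulmx11 m (X : 'M[C]_(1, m)) (Y : 'M[C]_(m, 1)) :
  ((X *m Y) 0 0)^* = (map_mx (@conjc R) X *m map_mx (@conjc R) Y) 0 0.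
Proof. by rewrite -(map_mxM (@conjc R)) [RHS]mxE. Qed.

Lemma map_conjc_cmx m p (A : 'M[R]_(m, p)) : map_mx (@conjc R) (cmx A) = cmx A.
Proof. by apply/matrixP => i j; rewrite !mxE conjc_real. Qed.

Lemma map_conjc_Gres n (M D K : 'M[R]_n) s :
  map_mx (@conjc R) (Gres M D K s) = Gres M D K s^*.
Proof. by rewrite /Gres map_invmx /pencil !map_mxD !map_mxZ !map_conjc_cmx rmorphXn. Qed.

End ComplexTwoByTwo.

Section CrossTransfer.
Context {R : rcfType} {n : nat} {M D K : 'M[R]_n} (B : 'cV[R]_n) (Cm : 'rV[R]_n).
Local Notation C := R[i].
Local Notation Gi x := (Gres M D K (iC R * x%:C)).
Local Notation Hi x := (Htf M D K B Cm (iC R * x%:C)).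

Definition cross_transfer (A : 'M[R]_n) (w z : R) : C :=
  (cmx Cm *m Gi w *m cmx A *m Gi z *m cmx B) 0 0.

Lemma cross_transfer_oppl A w z : cross_transfer A (- w) z = (cross_transfer A w (- z))^*.
Proof.
by rewrite /cross_transfer conjc_mulmx11 !map_mxM !map_conjc_cmx !map_conjc_Gres !conjc_iC opprK.
Qed.

Lemma Htf_oppr z : Hi (- z) = (Hi z)^*.
Proof. by rewrite /Htf conjc_mulmx11 !map_mxM !map_conjc_cmx map_conjc_Gres conjc_iC. Qed.

Lemma cross_transfer_lin w z a b :
  (cmx Cm *m Gi w *m (a *: cmx M + b *: cmx K) *m Gi z *m cmx B) 0 0
  = a * cross_transfer M w z + b * cross_transfer K w z.
Proof.
rewrite mulmxDr !mulmxDl -!scalemxAr -!scalemxAl.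
by rewrite [LHS]mxE [X in X + _]mxE [X in _ + X]mxE.
Qed.

Section ProportionalDamping.
Context {alpha beta : R} (hD : D = alpha *: M + beta *: K).

Lemma pencil_iC (x : R) : pencil M D K (iC R * x%:C) =
  (- (x ^+ 2)%:C + iC R * x%:C * alpha%:C) *: cmx M + (iC R * x%:C * beta%:C + 1) *: cmx K.
Proof.
have iCx2 : (iC R * x%:C) ^+ 2 = - (x ^+ 2)%:C by rewrite /iC expr2; simpc; rewrite expr2.
rewrite /pencil hD cmxD !cmxZ iCx2 scalerDr !scalerA !scalerDl scale1r.
by rewrite !addrA.
Qed.

Lemma cross_transfer_pencil_left w z : Gexists M D K (iC R * w%:C) ->
  - (w ^+ 2)%:C * cross_transfer M w z
  + iC R * w%:C * (alpha%:C * cross_transfer M w z + beta%:C * cross_transfer K w z)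
  + cross_transfer K w z = Hi z.
Proof.
move=> Gw.
have -> : Hi z = (cmx Cm *m Gi w *m pencil M D K (iC R * w%:C) *m Gi z *m cmx B) 0 0.
  by rewrite -(mulmxA (cmx Cm) (Gi w)) (mulVmx Gw) mulmx1.
rewrite pencil_iC cross_transfer_lin.
by move: (cross_transfer M w z) (cross_transfer K w z) => u k; ring.
Qed.

Lemma cross_transfer_pencil_right w z : Gexists M D K (iC R * z%:C) ->
  - (z ^+ 2)%:C * cross_transfer M w z
  + iC R * z%:C * (alpha%:C * cross_transfer M w z + beta%:C * cross_transfer K w z)
  + cross_transfer K w z = Hi w.
Proof.
move=> Gz.
have -> : Hi w = (cmx Cm *m Gi w *m pencil M D K (iC R * z%:C) *m Gi z *m cmx B) 0 0.
  by rewrite -(mulmxA _ (pencil _ _ _ _)) (mulmxV Gz) mulmx1.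
rewrite pencil_iC cross_transfer_lin.
by move: (cross_transfer M w z) (cross_transfer K w z) => u k; ring.
Qed.

End ProportionalDamping.

Lemma mulmx_weighted_entry p q (c : 'I_p -> C) (d : 'I_q -> C)
    (L : 'I_p -> 'rV[C]_n) (U : 'I_q -> 'cV[C]_n) (X : 'M[C]_n) i j :
  ((\matrix_(k, a) (c k * L k 0 a)) *m X *m (\matrix_(a, l) (d l * U l a 0))) i j
  = c i * d j * (L i *m X *m U j) 0 0.
Proof.
rewrite !mxE !mulr_sumr; apply: eq_bigr => b _; rewrite !mxE !mulr_suml !mulr_sumr.
by apply: eq_bigr => a _; rewrite !mxE; ring.
Qed.

Lemma LtlH_Utl_entry p q (A : 'M[R]_n) (z r : 'I_p -> R) (w f : 'I_q -> R) i j :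
  (LtlH M D K Cm w f *m cmx A *m Utl M D K B z r) i j
  = (f i)%:C * (r j * z j)%:C * cross_transfer A (w i) (z j).
Proof.
rewrite (@mulmx_weighted_entry _ _ (fun k => (f k)%:C) (fun l => (r l * z l)%:C)
  (fun k => cmx Cm *m Gi (w k)) (fun l => Gi (z l) *m cmx B)).
by rewrite /cross_transfer !mulmxA.
Qed.

Lemma BBt_entry q (w f : 'I_q -> R) k : BBt M D K Cm B w f k 0 = (f k)%:C * Hi (w k).
Proof. by rewrite /Htf !mxE mulr_sumr; apply: eq_bigr => a _; rewrite !mxE mulrA. Qed.

Lemma CCt_entry p (z r : 'I_p -> R) j : CCt M D K B Cm z r 0 j = (r j * z j)%:C * Hi (z j).
Proof. by rewrite /Htf -mulmxA !mxE mulr_sumr; apply: eq_bigr => a _; rewrite !mxE; ring. Qed.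

Section Interleaved.
Context {np nq : nat} (zeta rho : 'I_np -> R) (omega phi : 'I_nq -> R).

Lemma blk2_LtlH_Utl (A : 'M[R]_n) k j :
  let u := cross_transfer A (omega k) (zeta j) in
  let v := cross_transfer A (omega k) (- zeta j) in
  blk2 (LtlH M D K Cm (ilv_nodes omega) (ilv_weights phi) *m cmx A
        *m Utl M D K B (ilv_nodes zeta) (ilv_weights rho)) k j
  = (phi k * rho j * zeta j)%:C *: mx2 u (- v) v^*%C (- u^*%C).
Proof.
rewrite blk2E !LtlH_Utl_entry !ilv_nodes_blk !ilv_weights_blk /=.
rewrite !cross_transfer_oppl opprK scalemx_mx2.
by congr mx2; rewrite !real_complexM ?real_complexN; ring.
Qed.

Lemma blkc2_BBt k : let h := Hi (omega k) in
  blkc2 (BBt M D K Cm B (ilv_nodes omega) (ilv_weights phi)) k = (phi k)%:C *: cv2 h h^*%C.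
Proof. by rewrite blkc2E !BBt_entry !ilv_nodes_blk !ilv_weights_blk /= Htf_oppr scalemx_cv2. Qed.

Lemma blkr2_CCt j : let h := Hi (zeta j) in
  blkr2 (CCt M D K B Cm (ilv_nodes zeta) (ilv_weights rho)) j
  = (rho j * zeta j)%:C *: rv2 h (- h^*%C).
Proof.
rewrite blkr2E !CCt_entry !ilv_nodes_blk !ilv_weights_blk /= Htf_oppr scalemx_rv2.
by congr rv2; rewrite !real_complexM ?real_complexN; ring.
Qed.

Lemma F2_blk2_F1H (A : 'M[R]_n) k j :
  F2 R *m blk2 (LtlH M D K Cm (ilv_nodes omega) (ilv_weights phi) *m cmx A
                *m Utl M D K B (ilv_nodes zeta) (ilv_weights rho)) k j *m ctrmx (F1 R)
  = cmx ((phi k * rho j * zeta j) *: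
         realify (cross_transfer A (omega k) (zeta j)) (cross_transfer A (omega k) (- zeta j))).
Proof. by rewrite blk2_LtlH_Utl -scalemxAr -scalemxAl F2_realify cmxZ. Qed.

Lemma F2_blkc2_BBt k :
  F2 R *m blkc2 (BBt M D K Cm B (ilv_nodes omega) (ilv_weights phi)) k
  = (Num.sqrt 2 * phi k)%:C *:
    cmx (cv2 (complex.Re (Hi (omega k))) (- complex.Im (Hi (omega k)))).
Proof. by rewrite blkc2_BBt -scalemxAr F2_cv2_conj scalerA -real_complexM mulrC. Qed.

Lemma blkr2_CCt_F1H j :
  blkr2 (CCt M D K B Cm (ilv_nodes zeta) (ilv_weights rho)) j *m ctrmx (F1 R)
  = (Num.sqrt 2 * rho j * zeta j)%:C *:
    cmx (rv2 (complex.Re (Hi (zeta j))) (complex.Im (Hi (zeta j)))).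
Proof. by rewrite blkr2_CCt -scalemxAl rv2_conj_F1H scalerA -real_complexM mulrC mulrA. Qed.

End Interleaved.
End CrossTransfer.

Theorem mainTheorem3 (R : rcfType) (n : nat) (M D K : 'M[R]_n)
  (B : 'cV[R]_n) (Cm : 'rV[R]_n) (alpha beta : R) (np nq : nat)
  (zeta rho : 'I_np -> R) (omega phi : 'I_nq -> R) :
  M \in unitmx ->
  D = alpha *: M + beta *: K -> 0 <= alpha -> 0 <= beta ->
  (1 <= np)%N -> (1 <= nq)%N ->
  (forall j, 0 < zeta j) -> (forall k, 0 < omega k) ->
  (forall j, Gexists M D K (iC R * (zeta j)%:C) /\ Gexists M D K (iC R * (- zeta j)%:C)) ->
  (forall k, Gexists M D K (iC R * (omega k)%:C) /\ Gexists M D K (iC R * (- omega k)%:C)) ->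
  let zs := ilv_nodes zeta in let rs := ilv_weights rho in
  let ws := ilv_nodes omega in let fs := ilv_weights phi in
  let H := Htf M D K B Cm in
  let MR k j := F2 R *m blk2 (MMt M D K B Cm zs rs ws fs) k j *m ctrmx (F1 R) in
  let KR k j := F2 R *m blk2 (KKt M D K B Cm zs rs ws fs) k j *m ctrmx (F1 R) in
  let BR k := F2 R *m blkc2 (BBt M D K Cm B ws fs) k in
  let CR j := blkr2 (CCt M D K B Cm zs rs) j *m ctrmx (F1 R) in
  let Om2 k : 'M[R[i]]_2 := ((omega k ^+ 2)%:C)%:M in
  let Om1 k : 'M[R[i]]_2 := cmx (mx2 0 (omega k) (- omega k) 0) in
  let Th2 j : 'M[R[i]]_2 := ((zeta j ^+ 2)%:C)%:M in
  let Th1 j : 'M[R[i]]_2 := cmx (mx2 0 (zeta j) (- zeta j) 0) in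
  let Hz k j : 'M[R[i]]_2 := (2 * phi k * rho j * zeta j)%:C *:
      cmx (mx2 (complex.Re (H (iC R * (zeta j)%:C))) (complex.Im (H (iC R * (zeta j)%:C))) 0 0) in
  let Hw k j : 'M[R[i]]_2 := (2 * phi k * rho j * zeta j)%:C *:
      cmx (mx2 (complex.Re (H (iC R * (omega k)%:C))) 0 (- complex.Im (H (iC R * (omega k)%:C))) 0) in
  [/\ (forall k j, (exists A : 'M[R]_2, MR k j = cmx A) /\ (exists A : 'M[R]_2, KR k j = cmx A)),
      (forall k, BR k = (Num.sqrt 2 * phi k)%:C *:
          cmx (cv2 (complex.Re (H (iC R * (omega k)%:C))) (- complex.Im (H (iC R * (omega k)%:C))))),
      (forall j, CR j = (Num.sqrt 2 * rho j * zeta j)%:C *: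
          cmx (rv2 (complex.Re (H (iC R * (zeta j)%:C))) (complex.Im (H (iC R * (zeta j)%:C))))),
      (forall k j, - (Om2 k *m MR k j) + Om1 k *m (alpha%:C *: MR k j + beta%:C *: KR k j)
                   + KR k j = Hz k j) &
      (forall k j, - (MR k j *m Th2 j) + (alpha%:C *: MR k j + beta%:C *: KR k j) *m Th1 j
                   + KR k j = Hw k j)].
Proof.
move=> _ hD _ _ _ _ _ _ Gzeta Gomega zs rs ws fs H MR KR BR CR Om2 Om1 Th2 Th1 Hz Hw.
have MRE k j : MR k j = _ := F2_blk2_F1H B Cm zeta rho omega phi M k j.
have KRE k j : KR k j = _ := F2_blk2_F1H B Cm zeta rho omega phi K k j.
have c2 k j : 2 * phi k * rho j * zeta j = 2 * (phi k * rho j * zeta j) by rewrite !mulrA.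
split.
- by move=> k j; split; eexists; [exact: MRE | exact: KRE].
- exact: F2_blkc2_BBt.
- exact: blkr2_CCt_F1H.
- move=> k j; have [Gw _] := Gomega k.
  rewrite MRE KRE /Om2 /Om1 /Hz c2.
  apply: realify_pencil_left.
  + exact: cross_transfer_pencil_left hD _ _ Gw.
  + by rewrite -Htf_oppr; exact: cross_transfer_pencil_left hD _ _ Gw.
- move=> k j; have [Gz Gz'] := Gzeta j.
  rewrite MRE KRE /Th2 /Th1 /Hw c2.
  apply: realify_pencil_right.
  + exact: cross_transfer_pencil_right hD _ _ Gz.
  + exact: cross_transfer_pencil_right hD _ _ Gz'.
Qed.
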